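(* Fix $m\ge 2$, $y\in\{1,\dots,m\}$, $1\le k\le m-1$. Let $L^*_k:\mathbb{R}^m\to\mathbb{R}\cup\{+\infty\}$ be $$L^*_k(v)=\begin{cases}\sum_{j\ne y}v_j\log v_j+(1+v_y)\log(1+v_y), & \text{if }\langle\mathbf{1},v\rangle=0\text{ and }v_{\setminus y}\in\Delta^\alpha_k(1),\\ +\infty,&\text{otherwise,}\end{cases}$$ and let the top-$k$ entropy loss be its convex conjugate $L_k(u)=\sup_{v\in\mathbb{R}^m}\{\langle u,v\rangle-L^*_k(v)\}$. Then for every $u\in\mathbb{R}^m$ with $u_y=0$, $$L_k(u)=\max\Big\{\langle u_{\setminus y},x\rangle-(1-s)\log(1-s)-\langle x,\log x\rangle\ :\ x\in\Delta^\alpha_k(1),\ \langle\mathbf{1},x\rangle=s\Big\},$$ and for $k=1$ this equals the softmax loss: $L_1(u)=\log\big(1+\sum_{j\ne y}e^{u_j}\big)=\log\sum_{j}\exp(u_j-u_y)$.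
   Context: $v_{\setminus y}\in\mathbb{R}^{m-1}$ is $v$ with its $y$-th coordinate deleted; $\mathbf{1}$ is the all-ones vector; $\langle x,\log x\rangle=\sum_j x_j\log x_j$ with $0\log0=0$. The top-$k$ simplex ($\alpha$ version) of radius $r$ in $\mathbb{R}^{m-1}$ is $\Delta^\alpha_k(r)=\{x:\ \langle\mathbf{1},x\rangle\le r,\ 0\le x_i\le\tfrac1k\langle\mathbf{1},x\rangle\ \forall i\}$. In the intended application $u_j=f_j(x)-f_y(x)$, so $u_y=0$. *)

From Stdlib Require Import Reals Lra Lia ClassicalEpsilon.
Open Scope R_scope.

(* Vectors in R^n are functions nat -> R; only indices 0..n-1 are relevant.
   Coordinates are 0-based: the paper's y in {1..m} is y < m here. *)

Fixpoint sumR (n : nat) (f : nat -> R) : R :=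
  match n with
  | O => 0
  | S n' => sumR n' f + f n'
  end.

Definition ones_dot (n : nat) (x : nat -> R) : R := sumR n x.

Definition dot (n : nat) (u v : nat -> R) : R := sumR n (fun j => u j * v j).

(* t log t with the convention 0 log 0 = 0 *)
Definition xlnx (t : R) : R := if Rle_dec t 0 then 0 else t * ln t.

Definition ent (n : nat) (x : nat -> R) : R := sumR n (fun j => xlnx (x j)).

Definition del (y : nat) (v : nat -> R) : nat -> R :=
  fun i => if Nat.ltb i y then v i else v (S i).

Definition topk_simplex (n k : nat) (r : R) (x : nat -> R) : Prop :=
  ones_dot n x <= r /\
  forall i, (i < n)%nat -> 0 <= x i /\ x i <= / INR k * ones_dot n x.

Definition Lstar_dom (m y k : nat) (v : nat -> R) : Prop :=
  ones_dot m v = 0 /\ topk_simplex (m - 1) k 1 (del y v).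

Definition Lstar_val (m y : nat) (v : nat -> R) : R :=
  ent (m - 1) (del y v) + xlnx (1 + v y).

(* L*_k : R^m -> R u {+oo}, with None standing for +oo *)
Definition Lstar (m y k : nat) (v : nat -> R) : option R :=
  if excluded_middle_informative (Lstar_dom m y k v)
  then Some (Lstar_val m y v) else None.

(* The set { <u,v> - L*_k(v) : v in R^m, L*_k(v) < +oo }; values v with
   L*_k(v) = +oo contribute -oo to the supremum and are therefore omitted. *)
Definition conj_set (m y k : nat) (u : nat -> R) (t : R) : Prop :=
  exists v r, Lstar m y k v = Some r /\ t = dot m u v - r.

Definition Lk_eq (m y k : nat) (u : nat -> R) (c : R) : Prop :=
  is_lub (conj_set m y k u) c.

Definition topk_obj (m y : nat) (u x : nat -> R) : R :=
  dot (m - 1) (del y u) x - xlnx (1 - ones_dot (m - 1) x) - ent (m - 1) x.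

Definition is_max_topk (m y k : nat) (u : nat -> R) (c : R) : Prop :=
  (exists x, topk_simplex (m - 1) k 1 x /\ topk_obj m y u x = c) /\
  (forall x, topk_simplex (m - 1) k 1 x -> topk_obj m y u x <= c).

(* On the domain of [L*_k] a vector [v] is determined by [x = v_{\y}], because
   [v_y = -<1, x>]; as [u_y = 0], [<u, v> - L*_k(v)] is then exactly the objective at [x],
   so [L_k(u)] is the supremum of the objective over the top-k simplex.  The simplex is a
   closed subset of the unit cube and the objective is continuous ([t log t] is continuous
   at 0), so extracting a coordinatewise convergent subsequence from a maximizing sequence
   shows that the supremum is attained.  Completing [x] by the slack [1 - <1, x>] at
   position [y] gives a probability vector [q] on which the objective reads
   [<u, q> - <q, log q>]; Gibbs' variational principle bounds this by [log sum_j exp u_j],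
   with equality at the softmax of [u], which lies in the top-1 simplex. *)

From Stdlib Require Import Reals Lra Lia Rtopology FunctionalExtensionality Classical ClassicalEpsilon.
Open Scope R_scope.

Lemma sumR_ext n f g : (forall i, (i < n)%nat -> f i = g i) -> sumR n f = sumR n g.
Proof.
  induction n as [|n IH]; intros Hfg; simpl; [reflexivity|].
  rewrite IH, (Hfg n); [reflexivity | lia | intros i Hi; apply Hfg; lia].
Qed.

Lemma sumR_le n f g : (forall i, (i < n)%nat -> f i <= g i) -> sumR n f <= sumR n g.
Proof.
  induction n as [|n IH]; intros Hfg; simpl; [lra|].
  apply Rplus_le_compat; [apply IH; intros i Hi|]; apply Hfg; lia.
Qed.

Lemma sumR_plus n f g : sumR n (fun j => f j + g j) = sumR n f + sumR n g.
Proof. induction n as [|n IH]; simpl; [|rewrite IH]; lra. Qed.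

Lemma sumR_minus n f g : sumR n (fun j => f j - g j) = sumR n f - sumR n g.
Proof. induction n as [|n IH]; simpl; [|rewrite IH]; lra. Qed.

Lemma sumR_scal n c f : sumR n (fun j => c * f j) = c * sumR n f.
Proof. induction n as [|n IH]; simpl; [|rewrite IH]; lra. Qed.

Lemma sumR_nonneg n f : (forall i, (i < n)%nat -> 0 <= f i) -> 0 <= sumR n f.
Proof.
  induction n as [|n IH]; intros Hf; simpl; [lra|].
  apply Rplus_le_le_0_compat; [apply IH; intros i Hi|]; apply Hf; lia.
Qed.

Lemma sumR_term_le n f i :
  (forall j, (j < n)%nat -> 0 <= f j) -> (i < n)%nat -> f i <= sumR n f.
Proof.
  induction n as [|n IH]; intros Hf Hi; [lia|]. simpl.
  destruct (Nat.eq_dec i n) as [->|Hne].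
  - assert (0 <= sumR n f) by (apply sumR_nonneg; intros; apply Hf; lia). lra.
  - assert (f i <= sumR n f) by (apply IH; [intros; apply Hf|]; lia).
    assert (0 <= f n) by (apply Hf; lia). lra.
Qed.

Lemma del_pointwise y (g : R -> R -> R) u v i :
  del y (fun j => g (u j) (v j)) i = g (del y u i) (del y v i).
Proof. unfold del. destruct (Nat.ltb i y); reflexivity. Qed.

Lemma sumR_S_del n f y : (y <= n)%nat -> sumR (S n) f = sumR n (del y f) + f y.
Proof.
  revert y; induction n as [|n IH]; intros y Hy.
  - replace y with 0%nat by lia. simpl. lra.
  - change (sumR (S (S n)) f) with (sumR (S n) f + f (S n)).
    destruct (Nat.eq_dec y (S n)) as [->|Hne].
    + f_equal. apply sumR_ext. intros i Hi. unfold del.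
      destruct (Nat.ltb_spec i (S n)); [reflexivity|lia].
    + rewrite (IH y) by lia. simpl sumR.
      replace (del y f n) with (f (S n)); [lra|].
      unfold del. destruct (Nat.ltb_spec n y); [lia|reflexivity].
Qed.

Lemma sumR_del m f y : (y < m)%nat -> sumR m f = sumR (m - 1) (del y f) + f y.
Proof.
  intros Hy. destruct m as [|n]; [lia|].
  replace (S n - 1)%nat with n by lia. apply sumR_S_del. lia.
Qed.

Lemma dot_del m y u v : (y < m)%nat ->
  dot m u v = dot (m - 1) (del y u) (del y v) + u y * v y.
Proof.
  intros Hy. unfold dot. rewrite (sumR_del m _ y Hy). f_equal.
  apply sumR_ext. intros i _. apply (del_pointwise y Rmult).
Qed.

Definition ins (y : nat) (c : R) (x : nat -> R) : nat -> R :=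
  fun j => if Nat.ltb j y then x j else if Nat.eqb j y then c else x (j - 1)%nat.

Lemma ins_at y c x : ins y c x y = c.
Proof. unfold ins. rewrite Nat.ltb_irrefl, Nat.eqb_refl. reflexivity. Qed.

Lemma del_ins y c x : del y (ins y c x) = x.
Proof.
  apply functional_extensionality. intros i. unfold del, ins.
  destruct (Nat.ltb_spec i y); [reflexivity|].
  destruct (Nat.ltb_spec (S i) y); [lia|]. destruct (Nat.eqb_spec (S i) y); [lia|].
  f_equal. lia.
Qed.

Lemma ins_del y q j : ins y (q y) (del y q) j = q j.
Proof.
  unfold ins, del. destruct (Nat.ltb_spec j y); [reflexivity|].
  destruct (Nat.eqb_spec j y) as [->|Hne]; [reflexivity|].
  destruct (Nat.ltb_spec (j - 1) y); [lia|]. f_equal. lia.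
Qed.

Section Conjugate.
Variables (m y k : nat) (u : nat -> R).
Hypotheses (Hy : (y < m)%nat) (Hu : u y = 0).

Lemma conj_set_iff t :
  conj_set m y k u t <-> exists x, topk_simplex (m - 1) k 1 x /\ t = topk_obj m y u x.
Proof.
  unfold conj_set, Lstar, topk_obj, Lstar_val. split.
  - intros [v [r [Hr ->]]].
    destruct (excluded_middle_informative (Lstar_dom m y k v)) as [[Hsum Hx]|]; [|discriminate].
    injection Hr as <-. exists (del y v). split; [exact Hx|].
    unfold ones_dot in *. rewrite (sumR_del m _ y Hy) in Hsum.
    rewrite (dot_del m y u v Hy), Hu.
    replace (1 + v y) with (1 - sumR (m - 1) (del y v)) by lra. lra.
  - intros [x [Hx ->]].
    set (v := ins y (- ones_dot (m - 1) x) x).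
    assert (Hdom : Lstar_dom m y k v).
    { split; unfold v; [|rewrite del_ins; exact Hx].
      unfold ones_dot at 1. rewrite (sumR_del m _ y Hy), del_ins, ins_at.
      unfold ones_dot. lra. }
    exists v, (Lstar_val m y v). unfold Lstar_val.
    destruct (excluded_middle_informative (Lstar_dom m y k v)); [|contradiction].
    split; [reflexivity|].
    rewrite (dot_del m y u v Hy), Hu. unfold v. rewrite del_ins, ins_at.
    replace (1 + - ones_dot (m - 1) x) with (1 - ones_dot (m - 1) x) by lra. lra.
Qed.

Lemma Lk_eq_of_is_max_topk c : is_max_topk m y k u c -> Lk_eq m y k u c.
Proof.
  intros [[x [Hx Hc]] Hmax]. split.
  - intros t Ht. apply conj_set_iff in Ht as [x' [Hx' ->]]. auto.
  - intros b Hb. apply Hb, conj_set_iff. eauto.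
Qed.

End Conjugate.
Lemma ln_le_sub1 z : 0 < z -> ln z <= z - 1.
Proof. intros Hz. pose proof (exp_ineq1_le (ln z)) as H. rewrite exp_ln in H; lra. Qed.

Lemma xlnx_pos t : 0 < t -> xlnx t = t * ln t.
Proof. intros Ht. unfold xlnx. destruct (Rle_dec t 0); lra. Qed.

(* Fenchel-Young for [t ln t - t], whose conjugate is [exp]. *)
Lemma xlnx_young a x : 0 <= x -> a * x - xlnx x <= exp a - x.
Proof.
  intros Hx. pose proof (exp_pos a) as Ha.
  destruct (Req_dec x 0) as [->|Hne].
  - unfold xlnx. destruct (Rle_dec 0 0); lra.
  - assert (Hx' : 0 < x) by lra. rewrite xlnx_pos by exact Hx'.
    assert (Hz : 0 < exp a / x) by (apply Rdiv_lt_0_compat; assumption).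
    pose proof (ln_le_sub1 _ Hz) as Hln.
    unfold Rdiv in Hln. rewrite ln_mult, ln_exp, ln_Rinv in Hln
      by (try apply Rinv_0_lt_compat; assumption).
    assert (Hmul : x * (a + - ln x) <= x * (exp a * / x - 1))
      by (apply Rmult_le_compat_l; lra).
    replace (x * (exp a * / x - 1)) with (exp a - x) in Hmul by (field; lra). lra.
Qed.

Definition softmax (n : nat) (a : nat -> R) (i : nat) : R :=
  exp (a i) / sumR n (fun j => exp (a j)).

Lemma sumR_exp_pos n a : (0 < n)%nat -> 0 < sumR n (fun j => exp (a j)).
Proof.
  intros Hn. apply Rlt_le_trans with (exp (a 0%nat)); [apply exp_pos|].
  apply (sumR_term_le n (fun j => exp (a j))); [intros; left; apply exp_pos | exact Hn].
Qed.

Lemma softmax_pos n a i : (0 < n)%nat -> 0 < softmax n a i.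
Proof. intros Hn. apply Rdiv_lt_0_compat; [apply exp_pos | apply sumR_exp_pos, Hn]. Qed.

Lemma sumR_softmax n a : (0 < n)%nat -> sumR n (softmax n a) = 1.
Proof.
  intros Hn. pose proof (sumR_exp_pos n a Hn).
  unfold softmax, Rdiv. rewrite (sumR_ext n _ (fun j => / sumR n (fun j => exp (a j)) * exp (a j)))
    by (intros; apply Rmult_comm).
  rewrite sumR_scal. field. lra.
Qed.

Lemma gibbs_le n a q :
  (forall i, (i < n)%nat -> 0 <= q i) -> sumR n q = 1 ->
  sumR n (fun i => a i * q i - xlnx (q i)) <= ln (sumR n (fun i => exp (a i))).
Proof.
  intros Hq Hsum. destruct n as [|n]; [simpl in Hsum; lra|].
  set (Z := sumR (S n) (fun i => exp (a i))).
  assert (HZ : 0 < Z) by (apply sumR_exp_pos; lia).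
  apply Rle_trans with (sumR (S n) (fun i => / Z * exp (a i) + (ln Z - 1) * q i)).
  - apply sumR_le. intros i Hi.
    pose proof (xlnx_young (a i - ln Z) (q i) (Hq i Hi)) as Hyoung.
    assert (Hexp : exp (a i - ln Z) = / Z * exp (a i))
      by (unfold Rminus; rewrite exp_plus, exp_Ropp, exp_ln by exact HZ; ring).
    lra.
  - rewrite sumR_plus, !sumR_scal, Hsum. fold Z. field_simplify; lra.
Qed.

Lemma gibbs_softmax n a : (0 < n)%nat ->
  sumR n (fun i => a i * softmax n a i - xlnx (softmax n a i))
  = ln (sumR n (fun i => exp (a i))).
Proof.
  intros Hn. pose proof (sumR_exp_pos n a Hn) as HZ.
  rewrite (sumR_ext n _ (fun i => ln (sumR n (fun i => exp (a i))) * softmax n a i)).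
  - rewrite sumR_scal, sumR_softmax by exact Hn. ring.
  - intros i _. rewrite xlnx_pos by (apply softmax_pos, Hn).
    unfold softmax at 3, Rdiv. rewrite ln_mult, ln_exp, ln_Rinv
      by (try apply Rinv_0_lt_compat; try apply exp_pos; exact HZ).
    ring.
Qed.

Section SoftmaxMaximizer.
Variables (m y : nat) (u : nat -> R).
Hypotheses (Hy : (y < m)%nat) (Hu : u y = 0).

Lemma topk_obj_ins x :
  let q := ins y (1 - ones_dot (m - 1) x) x in
  topk_obj m y u x = sumR m (fun j => u j * q j - xlnx (q j)).
Proof.
  intros q. rewrite (sumR_del m _ y Hy).
  rewrite (sumR_ext _ _ (fun i => del y u i * x i - xlnx (x i))).
  - unfold topk_obj, dot, ent, q. rewrite sumR_minus, ins_at, Hu. lra.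
  - intros i _. rewrite (del_pointwise y (fun a b => a * b - xlnx b)).
    unfold q. rewrite del_ins. reflexivity.
Qed.

Lemma topk_obj_le_ln_sum_exp k x :
  topk_simplex (m - 1) k 1 x -> topk_obj m y u x <= ln (sumR m (fun j => exp (u j))).
Proof.
  intros [Hs Hx]. rewrite topk_obj_ins. apply gibbs_le.
  - intros j Hj. unfold ins.
    destruct (Nat.ltb_spec j y); [apply Hx; lia|].
    destruct (Nat.eqb_spec j y); [lra | apply Hx; lia].
  - rewrite (sumR_del m _ y Hy), del_ins, ins_at. unfold ones_dot. lra.
Qed.

Lemma softmax_del_topk_simplex : topk_simplex (m - 1) 1 1 (del y (softmax m u)).
Proof.
  assert (Hm : (0 < m)%nat) by lia.
  assert (Hsum : ones_dot (m - 1) (del y (softmax m u)) = 1 - softmax m u y).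
  { pose proof (sumR_softmax m u Hm) as H1. rewrite (sumR_del m _ y Hy) in H1.
    unfold ones_dot. lra. }
  split.
  - rewrite Hsum. pose proof (softmax_pos m u y Hm). lra.
  - intros i Hi. simpl INR. rewrite Rinv_1, Rmult_1_l.
    assert (Hpos : forall j, 0 <= del y (softmax m u) j)
      by (intros j; unfold del; destruct (Nat.ltb j y); left; apply softmax_pos, Hm).
    split; [apply Hpos|]. apply sumR_term_le; [intros; apply Hpos | exact Hi].
Qed.

Lemma topk_obj_softmax :
  topk_obj m y u (del y (softmax m u)) = ln (sumR m (fun j => exp (u j))).
Proof.
  assert (Hm : (0 < m)%nat) by lia.
  rewrite topk_obj_ins, <- (gibbs_softmax m u Hm).
  assert (Hslack : 1 - ones_dot (m - 1) (del y (softmax m u)) = softmax m u y).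
  { pose proof (sumR_softmax m u Hm) as H1. rewrite (sumR_del m _ y Hy) in H1.
    unfold ones_dot. lra. }
  apply sumR_ext. intros j _. rewrite Hslack, ins_del. reflexivity.
Qed.

Lemma is_max_topk_1 : is_max_topk m y 1 u (ln (sumR m (fun j => exp (u j)))).
Proof.
  split.
  - exists (del y (softmax m u)). split; [apply softmax_del_topk_simplex | apply topk_obj_softmax].
  - apply topk_obj_le_ln_sum_exp.
Qed.

Lemma sum_exp_del : 1 + sumR (m - 1) (fun j => exp (del y u j)) = sumR m (fun j => exp (u j)).
Proof.
  rewrite (sumR_del m _ y Hy), Hu, exp_0, Rplus_comm. f_equal.
  apply sumR_ext. intros i _. symmetry. apply (del_pointwise y (fun a _ => exp a) u u).
Qed.

End SoftmaxMaximizer.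

Definition increasing_nat (phi : nat -> nat) : Prop := forall p, (phi p < phi (S p))%nat.

Definition cv_coords (n : nat) (X : nat -> nat -> R) (L : nat -> R) : Prop :=
  forall i, (i < n)%nat -> Un_cv (fun p => X p i) (L i).

Lemma increasing_nat_ge phi : increasing_nat phi -> forall p, (p <= phi p)%nat.
Proof. intros Hphi p. induction p as [|p IH]; [lia|]. specialize (Hphi p). lia. Qed.

Lemma increasing_nat_lt phi : increasing_nat phi -> forall p q, (p < q)%nat -> (phi p < phi q)%nat.
Proof.
  intros Hphi p q Hpq. induction q as [|q IH]; [lia|]. specialize (Hphi q).
  destruct (Nat.eq_dec p q) as [->|Hne]; [exact Hphi|]. specialize (IH ltac:(lia)). lia.
Qed.

Lemma increasing_nat_comp phi psi :
  increasing_nat phi -> increasing_nat psi -> increasing_nat (fun p => phi (psi p)).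
Proof. intros Hphi Hpsi p. apply increasing_nat_lt; [exact Hphi | apply Hpsi]. Qed.

Lemma Un_cv_const c : Un_cv (fun _ => c) c.
Proof. intros eps Heps. exists 0%nat. intros. unfold R_dist. rewrite Rminus_diag, Rabs_R0. exact Heps. Qed.

Lemma Un_cv_subseq a l phi : increasing_nat phi -> Un_cv a l -> Un_cv (fun p => a (phi p)) l.
Proof.
  intros Hphi Ha eps Heps. destruct (Ha eps Heps) as [N HN]. exists N. intros p Hp.
  apply HN. pose proof (increasing_nat_ge phi Hphi p). lia.
Qed.

Lemma ValAdh_subseq a l : ValAdh a l -> exists phi, increasing_nat phi /\ Un_cv (fun p => a (phi p)) l.
Proof.
  intros Hl.
  assert (Hnear : forall N q, exists p, (N <= p)%nat /\ Rabs (a p - l) < RinvN q).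
  { intros N q. apply (Hl (disc l (RinvN q)) N). exists (RinvN q). intros z Hz. exact Hz. }
  destruct (choice (fun Nq p => (fst Nq <= p)%nat /\ Rabs (a p - l) < RinvN (snd Nq)))
    as [g Hg]; [intros [N q]; apply Hnear|].
  exists (fix phi p := match p with O => g (O, O) | S p' => g (S (phi p'), S p') end). split.
  - intros p. exact (proj1 (Hg (_, _))).
  - intros eps Heps. destruct (@RinvN_cv eps Heps) as [N HN]. exists N. intros p Hp.
    specialize (HN p Hp). unfold R_dist in *. rewrite Rminus_0_r in HN.
    eapply Rlt_le_trans; [|apply Rle_trans with (1 := Rle_abs _); left; exact HN].
    destruct p; simpl; apply Hg.
Qed.

Lemma cube_cv_subseq n X : (forall p i, (i < n)%nat -> 0 <= X p i <= 1) ->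
  exists phi L, increasing_nat phi /\ cv_coords n (fun p => X (phi p)) L.
Proof.
  induction n as [|n IH]; intros HX.
  - exists (fun p => p), (fun _ => 0). split; [intros p; lia | intros i Hi; lia].
  - destruct IH as [phi [L [Hphi HL]]]; [intros p i Hi; apply HX; lia|].
    destruct (Bolzano_Weierstrass (fun p => X (phi p) n) _ (compact_P3 0 1)) as [l Hl];
      [intros p; apply HX; lia|].
    destruct (ValAdh_subseq _ _ Hl) as [psi [Hpsi Hcv]].
    exists (fun p => phi (psi p)), (fun i => if Nat.eqb i n then l else L i). split.
    + apply increasing_nat_comp; assumption.
    + intros i Hi. destruct (Nat.eqb_spec i n) as [->|Hne]; [exact Hcv|].
      apply (Un_cv_subseq (fun p => X (phi p) i)); [exact Hpsi | apply HL; lia].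
Qed.

Lemma is_lub_approx E c eps : is_lub E c -> 0 < eps -> exists t, E t /\ c - eps < t.
Proof.
  intros [_ Hleast] Heps. apply NNPP. intros Hnone.
  assert (Hub : is_upper_bound E (c - eps)).
  { intros t Ht. apply Rnot_lt_le. intros Hlt. apply Hnone. eauto. }
  apply Hleast in Hub. lra.
Qed.

Section SequentialCompactness.
Variables (n : nat) (K : (nat -> R) -> Prop) (f : (nat -> R) -> R).
Hypothesis K_cube : forall x, K x -> forall i, (i < n)%nat -> 0 <= x i <= 1.
Hypothesis K_closed : forall X L, (forall p, K (X p)) -> cv_coords n X L -> K L.
Hypothesis f_cv :
  forall X L, (forall p, K (X p)) -> cv_coords n X L -> Un_cv (fun p => f (X p)) (f L).

Lemma max_attained :
  (exists x, K x) -> (exists B, forall x, K x -> f x <= B) ->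
  exists c, (exists x, K x /\ f x = c) /\ forall x, K x -> f x <= c.
Proof.
  intros [x0 Hx0] [B HB].
  set (E := fun t => exists x, K x /\ t = f x).
  destruct (completeness E) as [c Hc].
  { exists B. intros t [x [Hx ->]]. auto. }
  { exists (f x0), x0. auto. }
  assert (Hupper : forall x, K x -> f x <= c) by (intros x Hx; apply Hc; exists x; auto).
  assert (Happrox : forall p, exists x, K x /\ c - RinvN p < f x).
  { intros p. destruct (is_lub_approx E c (RinvN p) Hc (cond_pos _)) as [t [[x [Hx ->]] Ht]].
    eauto. }
  destruct (choice _ Happrox) as [X HX].
  destruct (cube_cv_subseq n X) as [phi [L [Hphi HL]]].
  { intros p i Hi. apply (K_cube (X p)); [apply HX | exact Hi]. }
  assert (HXphi : forall p, K (X (phi p))) by (intros p; apply HX).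
  assert (HKL : K L) by exact (K_closed _ _ HXphi HL).
  exists c. split; [|exact Hupper].
  exists L. split; [exact HKL|]. apply Rle_antisym; [exact (Hupper L HKL)|].
  apply (@Rle_cv_lim (fun p => c - RinvN p) (fun p => f (X (phi p)))).
  - intros p. destruct (HX (phi p)) as [_ Hlt].
    assert (RinvN (phi p) <= RinvN p); [|lra].
    simpl. apply Rinv_le_contravar; [pose proof (pos_INR p); lra|].
    apply Rplus_le_compat_r, le_INR, increasing_nat_ge, Hphi.
  - pose proof (CV_minus _ _ _ _ (Un_cv_const c) RinvN_cv) as Hcv.
    rewrite Rminus_0_r in Hcv. exact Hcv.
  - exact (f_cv _ _ HXphi HL).
Qed.

End SequentialCompactness.

Lemma xlnx_nonpos t : t <= 0 -> xlnx t = 0.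
Proof. intros Ht. unfold xlnx. destruct (Rle_dec t 0); [reflexivity | lra]. Qed.

Lemma Rabs_xlnx_le t : t <= 1 -> Rabs (xlnx t) <= 2 * sqrt t.
Proof.
  intros Ht1. destruct (Rle_dec t 0) as [Ht|Ht].
  - rewrite xlnx_nonpos, Rabs_R0 by exact Ht. pose proof (sqrt_pos t). lra.
  - assert (Ht0 : 0 < t) by lra. rewrite xlnx_pos by exact Ht0.
    pose proof (sqrt_lt_R0 t Ht0) as Hs. pose proof (sqrt_sqrt t (Rlt_le _ _ Ht0)) as Hss.
    set (s := sqrt t) in *.
    assert (Hln : ln t = 2 * ln s) by (rewrite <- Hss, ln_mult; lra).
    assert (Hs1 : s <= 1) by nra.
    pose proof (ln_le_sub1 s Hs). pose proof (ln_le_sub1 (/ s) (Rinv_0_lt_compat _ Hs)) as Hinv.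
    rewrite ln_Rinv in Hinv by exact Hs.
    assert (Hsinv : s * / s = 1) by (field; lra).
    rewrite Hln, <- Hss, Rabs_left1 by nra. nra.
Qed.

Lemma xlnx_cv0 a : Un_cv a 0 -> Un_cv (fun p => xlnx (a p)) 0.
Proof.
  intros Ha eps Heps.
  pose proof (continuity_seq sqrt a 0 (continuity_pt_sqrt 0 (Rle_refl 0)) Ha) as Hsqrt.
  rewrite sqrt_0 in Hsqrt.
  destruct (Hsqrt (eps / 2) ltac:(lra)) as [N1 HN1]. destruct (Ha 1 Rlt_0_1) as [N2 HN2].
  exists (max N1 N2). intros p Hp.
  specialize (HN1 p ltac:(lia)). specialize (HN2 p ltac:(lia)).
  unfold R_dist in *. rewrite Rminus_0_r in *.
  pose proof (Rle_abs (a p)). pose proof (Rle_abs (sqrt (a p))).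
  pose proof (Rabs_xlnx_le (a p) ltac:(lra)). lra.
Qed.

Lemma xlnx_continuity_pt l : l <> 0 -> continuity_pt xlnx l.
Proof.
  intros Hl. destruct (Rlt_or_le l 0) as [Hneg|Hnonneg].
  - apply (continuity_pt_locally_ext (fun _ => 0) _ (- l)); [lra| |apply continuity_pt_const; intros ? ?; reflexivity].
    intros t Ht. unfold R_dist in Ht. apply Rabs_def2 in Ht. symmetry. apply xlnx_nonpos. lra.
  - apply (continuity_pt_locally_ext (fun t => t * ln t) _ l); [lra| |].
    + intros t Ht. unfold R_dist in Ht. apply Rabs_def2 in Ht. symmetry. apply xlnx_pos. lra.
    + apply derivable_continuous_pt. exists (ln l + 1).
      replace (ln l + 1) with (1 * ln l + l * / l) by (field; lra).
      apply derivable_pt_lim_mult; [apply derivable_pt_lim_id | apply derivable_pt_lim_ln; lra].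
Qed.

Lemma xlnx_cv a l : Un_cv a l -> Un_cv (fun p => xlnx (a p)) (xlnx l).
Proof.
  intros Ha. destruct (Req_dec l 0) as [->|Hl].
  - rewrite xlnx_nonpos by lra. apply xlnx_cv0, Ha.
  - apply continuity_seq; [apply xlnx_continuity_pt, Hl | exact Ha].
Qed.

Lemma sumR_cv n F L :
  (forall j, (j < n)%nat -> Un_cv (fun p => F p j) (L j)) ->
  Un_cv (fun p => sumR n (F p)) (sumR n L).
Proof.
  induction n as [|n IH]; intros HF; simpl; [apply Un_cv_const|].
  apply CV_plus; [apply IH; intros j Hj|]; apply HF; lia.
Qed.

Lemma topk_simplex_cube n k x : (1 <= k)%nat -> topk_simplex n k 1 x ->
  forall i, (i < n)%nat -> 0 <= x i <= 1.
Proof.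
  intros Hk [Hs Hx] i Hi. destruct (Hx i Hi) as [Hxi0 Hxi].
  assert (Hsum : 0 <= ones_dot n x) by (apply sumR_nonneg; intros j Hj; apply Hx, Hj).
  assert (Hinvk : 0 < / INR k <= 1).
  { assert (1 <= INR k) by (apply (le_INR 1), Hk). split.
    - apply Rinv_0_lt_compat. lra.
    - rewrite <- Rinv_1. apply Rinv_le_contravar; lra. }
  split; [exact Hxi0|]. nra.
Qed.

Lemma topk_simplex_closed n k X L :
  (forall p, topk_simplex n k 1 (X p)) -> cv_coords n X L -> topk_simplex n k 1 L.
Proof.
  intros HX HL.
  assert (Hsum : Un_cv (fun p => ones_dot n (X p)) (ones_dot n L)) by (apply sumR_cv, HL).
  split.
  - apply (@Rle_cv_lim _ (fun _ => 1) _ _ (fun p => proj1 (HX p)) Hsum (Un_cv_const 1)).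
  - intros i Hi. split.
    + apply (@Rle_cv_lim (fun _ => 0) (fun p => X p i)); [|apply Un_cv_const | apply HL, Hi].
      intros p. apply (proj2 (HX p) i Hi).
    + apply (@Rle_cv_lim (fun p => X p i) (fun p => / INR k * ones_dot n (X p)));
        [| apply HL, Hi | apply CV_mult; [apply Un_cv_const | exact Hsum]].
      intros p. apply (proj2 (HX p) i Hi).
Qed.

Lemma topk_obj_cv m y u X L : cv_coords (m - 1) X L ->
  Un_cv (fun p => topk_obj m y u (X p)) (topk_obj m y u L).
Proof.
  intros HL. unfold topk_obj, dot, ent.
  assert (Hsum : Un_cv (fun p => ones_dot (m - 1) (X p)) (ones_dot (m - 1) L)) by (apply sumR_cv, HL).
  repeat apply CV_minus.
  - apply (sumR_cv _ (fun p j => del y u j * X p j)). intros j Hj.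
    apply CV_mult; [apply Un_cv_const | apply HL, Hj].
  - apply xlnx_cv, CV_minus; [apply Un_cv_const | exact Hsum].
  - apply (sumR_cv _ (fun p j => xlnx (X p j))). intros j Hj. apply xlnx_cv, HL, Hj.
Qed.

Lemma is_max_topk_exists m y k u : (y < m)%nat -> u y = 0 -> (1 <= k)%nat ->
  exists c, is_max_topk m y k u c.
Proof.
  intros Hy Hu Hk.
  destruct (max_attained (m - 1) (topk_simplex (m - 1) k 1) (topk_obj m y u)) as [c Hc].
  - intros x. apply topk_simplex_cube, Hk.
  - apply topk_simplex_closed.
  - intros X L _. apply topk_obj_cv.
  - exists (fun _ => 0). assert (H0 : ones_dot (m - 1) (fun _ => 0) = 0)
      by (unfold ones_dot; induction (m - 1)%nat as [|n IH]; simpl; [|rewrite IH]; lra).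
    split; [|intros i Hi]; rewrite H0; lra.
  - exists (ln (sumR m (fun j => exp (u j)))). apply topk_obj_le_ln_sum_exp; assumption.
  - exists c. exact Hc.
Qed.

Theorem proposition8 (m y k : nat) (u : nat -> R) :
  (2 <= m)%nat -> (y < m)%nat -> (1 <= k)%nat -> (k <= m - 1)%nat ->
  u y = 0 ->
  (exists c, Lk_eq m y k u c /\ is_max_topk m y k u c) /\
  (k = 1%nat ->
     Lk_eq m y k u (ln (1 + sumR (m - 1) (fun j => exp (del y u j)))) /\
     ln (1 + sumR (m - 1) (fun j => exp (del y u j)))
       = ln (sumR m (fun j => exp (u j - u y)))).
Proof.
  intros _ Hy Hk _ Hu. split.
  - destruct (is_max_topk_exists m y k u Hy Hu Hk) as [c Hc].
    exists c. split; [apply Lk_eq_of_is_max_topk|]; assumption.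
  - intros ->. rewrite (sum_exp_del m y u Hy Hu). split.
    + apply Lk_eq_of_is_max_topk, is_max_topk_1; assumption.
    + rewrite Hu. do 2 f_equal. apply functional_extensionality. intros j. f_equal. ring.
Qed.
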